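(* Let $X_1,\dots,X_n$ be i.i.d. positive random variables with mean $\mu$ such that $\alpha=\|X_1-\mu\|_{\psi_1}<+\infty$, and let $\hat X_n=\frac1n\sum_{i=1}^nX_i$. Let $\eta=\alpha/\mu$, and for $\delta\in(0,1)$ let $C_{n,\delta}=2\sqrt{\log(2/\delta)/n}+2\log(2/\delta)/n$. Then with probability at least $1-\delta$, $$\mu\ge \hat X_n\,(1-\eta C_{n,\delta})_+ .$$ Moreover, if $\eta C_{n,\delta}\le \tfrac14$, then with probability at least $1-\delta$, $$\hat X_n(1-\eta C_{n,\delta})_+\le\mu\le \hat X_n\Bigl(1+\tfrac43\eta C_{n,\delta}\Bigr).$$
   Context: For a real random variable $Y$, $\|Y\|_{\psi_1}=\inf\{C>0:\mathbb E[\exp(|Y|/C)]\le2\}$ (sub-exponential / Orlicz norm). $(x)_+=\max\{x,0\}$. *)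

From HB Require Import structures.
From mathcomp Require Import all_boot all_order all_algebra.
From mathcomp Require Import all_classical all_reals all_analysis.
Set Implicit Arguments. Unset Strict Implicit. Unset Printing Implicit Defensive.
Import Order.TTheory GRing.Theory Num.Theory.
Local Open Scope classical_set_scope.
Local Open Scope ring_scope.

Definition psi1_norm d (T : measurableType d) (R : realType)
  (P : probability T R) (Y : T -> R) : \bar R :=
  ereal_inf [set (C%:E) | C in
    [set C : R | 0 < C /\ (\int[P]_x (expR (`|Y x| / C))%:E <= 2%:E)%E]].

Definition mutually_independent d (T : measurableType d) (R : realType)
  (P : probability T R) (n : nat) (X : 'I_n -> T -> R) : Prop :=
  forall A : 'I_n -> set R, (forall i, measurable (A i)) ->
    P (\bigcap_(i in [set: 'I_n]) (X i @^-1` A i)) =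
    (\prod_(i < n) P (X i @^-1` A i))%E.

Definition identically_distributed d (T : measurableType d) (R : realType)
  (P : probability T R) (n : nat) (X : 'I_n -> T -> R) : Prop :=
  forall (i j : 'I_n) (A : set R), measurable A ->
    P (X i @^-1` A) = P (X j @^-1` A).

Definition emp_mean (T : Type) (R : realType) (n : nat) (X : 'I_n -> T -> R)
  (w : T) : R := (\sum_(i < n) X i w) / n%:R.

Definition Cnd (R : realType) (n : nat) (delta : R) : R :=
  2 * Num.sqrt (ln (2 / delta) / n%:R) + 2 * ln (2 / delta) / n%:R.

(* For 0 <= t <= 1, exp (t z) <= 1 + t z + t^2 (exp |z| - 1) termwise on the
   exponential series, so a centred Y with E exp (|Y| / a) <= 2 has
   E exp (t Y / a) <= 1 + t^2 <= exp (t^2).  By independence the moment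
   generating function of a sum is bounded by the product of the factors, and
   Markov's inequality for it, at t = min (sqrt (L / n), 1) and a scale a
   just above the psi_1 norm alpha, gives
   P (mean > alpha (2 sqrt (L / n) + 2 L / n)) <= exp (- L).  Applied to +-(X_i - mu) with L = log (2 / delta),
   a union bound gives |X_n - mu| <= alpha C = eta C mu with probability at
   least 1 - delta, and both relative bounds are elementary consequences of
   this event (the upper one using eta C <= 1/4). *)

From HB Require Import structures.
From mathcomp Require Import all_boot all_order all_algebra.
From mathcomp Require Import all_classical all_reals all_analysis.
From mathcomp Require Import finmap measurable_realfun ring lra.
Set Implicit Arguments.
Unset Strict Implicit.
Unset Printing Implicit Defensive.
Import Order.TTheory GRing.Theory Num.Theory.
Local Open Scope classical_set_scope.
Local Open Scope ring_scope.
Import numFieldNormedType.Exports.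
Import HBNNSimple.

Section real_inequalities.
Variable R : realType.
Implicit Types t z r K e m x : R.

Lemma expR_le_quadratic t z : 0 <= t <= 1 ->
  expR (t * z) <= 1 + t * z + t ^+ 2 * (expR `|z| - 1).
Proof.
move=> /andP[t0 t1].
pose v N := 1 + t * z + t ^+ 2 * (series (exp_coeff `|z|) N - 1).
have cvv : v @ \oo --> 1 + t * z + t ^+ 2 * (expR `|z| - 1).
  apply: cvgD; first exact: cvg_cst.
  apply: cvgM; first exact: cvg_cst.
  apply: cvgB; last exact: cvg_cst.
  exact: is_cvg_series_exp_coeff.
rewrite -(cvg_lim _ cvv)// /expR.
apply: ler_lim; [exact: is_cvg_series_exp_coeff|exact: (cvgP _ cvv)|].
near=> N.
have [M ->] : exists M, N = M.+2.
  exists N.-2; rewrite -subn2 -addn2 subnK//; near: N; exists 2%N => //.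
rewrite /v /series /= !big_nat_recl//= /exp_coeff /= !expr0 !expr1 !fact0 ?divr1.
rewrite addrA lerD2l [1 + _]addrC addrK mulrDr -[X in X <= _]add0r lerD//.
  by rewrite mulr_ge0// exprn_ge0.
(* compare the exponential series termwise: (t z)^k <= t^2 |z|^k for k >= 2 as t <= 1 *)
rewrite big_distrr /=; apply: ler_sum_nat => i _ /=.
rewrite mulrA ler_wpM2r// ?invr_ge0//.
rewrite (le_trans (ler_norm _))// normrX normrM (ger0_norm t0) exprMn.
rewrite ler_wpM2r ?exprn_ge0//.
by rewrite !exprS !mulrA expr0 mulr1 -[leRHS]mulr1 ler_wpM2l ?mulr_ge0// exprn_ile1.
Unshelve. all: by end_near. Qed.

Lemma exponent_min1_le r K : 0 < r ->
  2 * r + 2 * r ^+ 2 <= K * (1 + Num.min r 1) ->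
  r ^+ 2 <= Num.min r 1 * K - Num.min r 1 ^+ 2.
Proof.
by move=> r0; have [r1|r1] := leP r 1; nra.
Qed.

Lemma relative_lower_bound e m x : 0 < m -> 0 <= x -> e - m <= x * m ->
  e * Num.max (1 - x) 0 <= m.
Proof.
move=> m0 x0 h; rewrite /Num.max; case: ifPn => [_|]; first by rewrite mulr0 ltW.
rewrite -leNgt => x1.
have : 0 <= (m + x * m - e) * (1 - x) by rewrite mulr_ge0//; lra.
have : 0 <= m * x ^+ 2 by rewrite mulr_ge0 ?sqr_ge0// ltW.
nra.
Qed.

Lemma relative_upper_bound e m x : 0 < m -> 0 <= x -> x <= 1 / 4 ->
  m - e <= x * m -> m <= e * (1 + 4 / 3 * x).
Proof.
move=> m0 x0 x4 h.
have : 0 <= (e - m + x * m) * (1 + 4 / 3 * x).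
  by rewrite mulr_ge0//; [lra|]; rewrite addr_ge0// mulr_ge0.
have x4' : 0 <= 1 - 4 * x by lra.
have := mulr_ge0 (mulr_ge0 (ltW m0) x0) x4'.
nra.
Qed.

Lemma ln_two_div_gt0 (delta : R) : 0 < delta < 1 -> 0 < ln (2 / delta).
Proof.
by case/andP=> delta0 delta1; rewrite ln_gt0 // ltr_pdivlMr // mul1r (lt_trans delta1) // ltr1n.
Qed.

Lemma Cnd_ge0 n (delta : R) : 0 < delta < 1 -> 0 <= Cnd n delta.
Proof.
move=> /ln_two_div_gt0/ltW L0.
by rewrite addr_ge0 ?mulr_ge0 ?sqrtr_ge0 ?divr_ge0.
Qed.

End real_inequalities.

Lemma lee_prod (R : realType) (I : finType) (F G : I -> \bar R) :
  (forall i, 0 <= F i <= G i)%E -> (\prod_i F i <= \prod_i G i)%E.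
Proof.
move=> FG; suff /andP[] : (0 <= \prod_i F i <= \prod_i G i)%E by [].
apply: (big_ind2 (fun x y => 0 <= x <= y)%E) => //.
  by apply/andP; split.
move=> x1 x2 y1 y2 /andP[x10 x12] /andP[y10 y12].
by rewrite mule_ge0//= lee_pmul.
Qed.

Lemma prodr_indic (T : Type) (R : realType) (I : finType) (A : I -> set T) w :
  \prod_i \1_(A i) w = \1_(\bigcap_(i in [set: I]) A i) w :> R.
Proof.
have [Aw|NAw] := pselect (forall i, A i w).
  rewrite indicE mem_set; last by move=> i _; exact: Aw.
  by rewrite big1// => i _; rewrite indicE mem_set.
have [i Ai] := (existsNP _).2 NAw.
rewrite (bigD1 i)//= indicE memNset// mul0r indicE memNset//.
by move=> Aiw; apply: Ai; exact: Aiw.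
Qed.

Section probability_lemmas.
Context d (T : measurableType d) (R : realType) (P : probability T R).
Implicit Types (f g : T -> R) (A : set T).

(* [integral_cst] exposes [P] through its measure structure, where [probability_setT] does not rewrite *)
Let measure_setT : (P : measure T R) setT = 1%E.
Proof. exact: probability_setT. Qed.

Lemma measurable_ler_set f g : measurable_fun setT f -> measurable_fun setT g ->
  measurable [set w | f w <= g w].
Proof. by move=> mf mg; rewrite -[X in measurable X]setTI; exact: measurable_fun_le. Qed.

Lemma measurable_ltr_set f g : measurable_fun setT f -> measurable_fun setT g ->
  measurable [set w | f w < g w].
Proof.
move=> mf mg; rewrite -[X in measurable X]setTI.
under eq_set do rewrite -lte_fin.
by apply: measurable_lte => //; exact/measurable_EFinP.
Qed.

Lemma markov_ge0 f (c : R) : measurable_fun setT f ->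
  (forall w, 0 <= f w) -> 0 < c ->
  (c%:E * P [set w | (c <= f w)%R] <= \int[P]_w (f w)%:E)%E.
Proof.
move=> mf f0 c0.
have mA : measurable [set w | c <= f w] by exact: measurable_ler_set.
have -> : P [set w | (c <= f w)%R] = (\int[P]_w (\1_[set w | c <= f w] w)%:E)%E.
  by rewrite integral_indic// setIT.
rewrite -ge0_integralZl_EFin//; last 2 first.
- by apply/measurable_EFinP; exact: measurable_indic.
- exact: ltW.
apply: ge0_le_integral => //.
- by move=> w _; rewrite lee_fin mulr_ge0// ltW.
- by apply/measurable_EFinP; apply: measurable_funM => //; exact: measurable_indic.
- exact/measurable_EFinP.
move=> w _; rewrite lee_fin indicE.
by case: (boolP (w \in _)) => [/set_mem|_]; rewrite ?mulr1 ?mulr0.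
Qed.

Lemma measure_gtr_le f (c : R) (b : \bar R) : measurable_fun setT f ->
  (forall s, c < s -> (P [set w | (s <= f w)%R] <= b)%E) ->
  (P [set w | (c < f w)%R] <= b)%E.
Proof.
move=> mf Pb.
pose F k := [set w | c + k.+1%:R^-1 <= f w].
have mF k : measurable (F k) by exact: measurable_ler_set.
have UF : \bigcup_k F k = [set w | c < f w].
  apply/seteqP; split => w /=.
    by move=> [k _]; apply: lt_le_trans; rewrite ltrDl invr_gt0.
  by move=> /ltr_add_invr [k hk]; exists k => //; exact: ltW.
have nd : {homo F : k m / (k <= m)%N >-> (k <= m)%O}.
  move=> k m km; apply/subsetPset => w; rewrite /F /=; apply: le_trans.
  by rewrite lerD2l lef_pV2 ?posrE// ler_nat.
have mU : measurable (\bigcup_k F k) by rewrite UF; exact: measurable_ltr_set.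
have := @nondecreasing_cvg_mu _ _ _ (P : measure T R) F mF mU nd.
rewrite UF => cvF.
rewrite -(cvg_lim _ cvF)//; apply: lime_le; first exact: (cvgP _ cvF).
by apply: nearW => k; apply: Pb; rewrite ltrDl invr_gt0.
Qed.

Lemma integral_gt0 f : measurable_fun setT f -> (forall w, 0 < f w) ->
  (0 < \int[P]_w (f w)%:E)%E.
Proof.
move=> mf f0; rewrite ltNge; apply/negP => int_le0.
have : (P [set w | (0 < f w)%R] <= 0)%E.
  apply: measure_gtr_le => // s s0.
  have := markov_ge0 mf (fun w => ltW (f0 w)) s0.
  by move=> /le_trans/(_ int_le0); rewrite pmule_rle0 ?lte_fin.
have -> : [set w | 0 < f w] = setT by apply/seteqP; split => w //= _.
by rewrite probability_setT lee_fin ler10.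
Qed.

Lemma integral_sum_indic (I : finType) (a : I -> R) (E : I -> set T) :
  (forall j, 0 <= a j) -> (forall j, measurable (E j)) ->
  (\int[P]_w (\sum_j a j * \1_(E j) w)%:E = (\sum_j a j * fine (P (E j)))%:E)%E.
Proof.
move=> a0 mE; under eq_integral do rewrite -sumEFin.
rewrite ge0_integral_sum//; last 2 first.
- by move=> j; apply/measurable_EFinP; apply: measurable_funM.
- by move=> j x _; rewrite lee_fin mulr_ge0.
rewrite -sumEFin; apply: eq_bigr => j _.
under eq_integral do rewrite EFinM.
rewrite ge0_integralZl_EFin//; last by apply/measurable_EFinP; exact: measurable_indic.
by rewrite integral_indic// setIT EFinM fineK// fin_num_measure.
Qed.

Lemma mutually_independent_comp n (X : 'I_n -> T -> R) (phi : R -> R) :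
  measurable_fun setT phi -> mutually_independent P X ->
  mutually_independent P (fun i => phi \o X i).
Proof.
move=> mphi indX A mA; rewrite (indX (fun i => phi @^-1` A i)) //.
by move=> i; rewrite -[X in measurable X]setTI; apply: mphi.
Qed.

Section independent_family.
Variables (n : nat) (X : 'I_n -> T -> R).
Hypotheses (mX : forall i, measurable_fun setT (X i)) (indX : mutually_independent P X).

Lemma integral_prod_simple_indep (I : finType) (c : I -> R) (B : I -> set R) :
  (forall k, 0 <= c k) -> (forall k, measurable (B k)) ->
  (\int[P]_w (\prod_i \sum_k c k * \1_(B k) (X i w))%:E =
   \prod_i \int[P]_w (\sum_k c k * \1_(B k) (X i w))%:E)%E.
Proof.
move=> c0 mB.
have mXB i k : measurable (X i @^-1` B k).
  by rewrite -[X in measurable X]setTI; exact: mX.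
have mXBf (f : {ffun 'I_n -> I}) : measurable (\bigcap_(i in [set: 'I_n]) X i @^-1` B (f i)).
  by apply: fin_bigcap_measurable => // i _.
have indicXB i w k : \1_(B k) (X i w) = \1_(X i @^-1` B k) w :> R by rewrite !indicE.
have expand w : \prod_i \sum_k c k * \1_(B k) (X i w) =
    \sum_(f : {ffun 'I_n -> I}) (\prod_i c (f i)) *
      \1_(\bigcap_(i in [set: 'I_n]) X i @^-1` B (f i)) w.
  rewrite bigA_distr_bigA; apply: eq_bigr => f _; rewrite big_split /= -prodr_indic.
  by congr (_ * _); apply: eq_bigr => i _; rewrite indicXB.
under eq_integral do rewrite expand.
rewrite integral_sum_indic//; last by move=> f; exact: prodr_ge0.
have factor i : (\int[P]_w (\sum_k c k * \1_(B k) (X i w))%:E =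
    (\sum_k c k * fine (P (X i @^-1` B k)))%:E)%E.
  by under eq_integral do under eq_bigr do rewrite indicXB; rewrite integral_sum_indic.
rewrite (eq_bigr _ (fun i _ => factor i)).
rewrite prodEFin bigA_distr_bigA; congr EFin; apply: eq_bigr => f _.
rewrite big_split /=; congr (_ * _).
apply: EFin_inj; rewrite -prodEFin fineK ?fin_num_measure// indX//.
by apply: eq_bigr => i _; rewrite fineK// fin_num_measure.
Qed.

Lemma integral_prod_nnsfun_indep (s : {nnsfun R >-> R}) :
  (\int[P]_w (\prod_i s (X i w))%:E = \prod_i \int[P]_w (s (X i w))%:E)%E.
Proof.
under eq_integral do under eq_bigr do rewrite fimfunEord.
under eq_bigr do under eq_integral do rewrite fimfunEord.
apply: integral_prod_simple_indep => // j.
have : (enum_fset (fset_set (range s)))`_j \in fset_set (range s).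
  exact: mem_nth.
by rewrite in_fset_set // => /set_mem [y _ <-]; exact: fun_ge0.
Qed.

Lemma integral_prod_indep_le (g : R -> R) :
  measurable_fun setT g -> (forall x, 0 <= g x) ->
  (\int[P]_w (\prod_i g (X i w))%:E <= \prod_i \int[P]_w (g (X i w))%:E)%E.
Proof.
move=> mg g0.
have mEg : measurable_fun setT (EFin \o g) by exact/measurable_EFinP.
pose s k := nnsfun_approx measurableT mEg k.
have Eg0 x : setT x -> (0 <= (EFin \o g) x)%E by move=> _; rewrite lee_fin.
have s_le k x : s k x <= g x by rewrite /s nnsfun_approxE -lee_fin; exact: le_approx.
have s_cvg x : s^~ x @ \oo --> g x.
  exact: fine_cvg (cvg_nnsfun_approx measurableT mEg Eg0 (I : setT x)).
have s_nd x : {homo s^~ x : a b / (a <= b)%N >-> a <= b}.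
  by move=> a b ab; exact/lefP/nd_nnsfun_approx.
pose F k w := (\prod_i s k (X i w))%:E.
have mF k : measurable_fun setT (F k).
  by apply/measurable_EFinP; apply: measurable_prod => i _; exact: measurableT_comp.
have F0 k w : setT w -> (0 <= F k w)%E.
  by move=> _; rewrite lee_fin; apply: prodr_ge0 => i _.
have F_nd w : setT w -> {homo F^~ w : a b / (a <= b)%N >-> (a <= b)%E}.
  by move=> _ a b ab; rewrite lee_fin; apply: ler_prod => i _; rewrite fun_ge0 s_nd.
have F_lim w : limn (F^~ w) = (\prod_i g (X i w))%:E.
  have cvP := cvg_big (U := R) (x0 := 1) (P := xpredT) (r := index_enum 'I_n) mul_continuous
    eventually_filter (fun i _ => s_cvg (X i w)).
  rewrite -(cvg_lim _ cvP)// -EFin_lim //; exact: cvgP cvP.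
rewrite (eq_integral (fun w => limn (F^~ w))); last by move=> w _; rewrite F_lim.
rewrite monotone_convergence//; apply: lime_le.
  apply: ereal_nondecreasing_is_cvgn => a b ab.
  by apply: ge0_le_integral => // [w _|w _]; [exact: F0|exact: (F_nd w I)].
apply: nearW => k; rewrite /F integral_prod_nnsfun_indep; apply: lee_prod => i.
apply/andP; split; first by apply: integral_ge0 => w _; rewrite lee_fin.
apply: ge0_le_integral => //.
- by move=> w _; rewrite lee_fin.
- by apply/measurable_EFinP; exact: measurableT_comp.
- by apply/measurable_EFinP; exact: measurableT_comp.
- by move=> w _; rewrite lee_fin s_le.
Qed.

End independent_family.

Lemma ge0_integral_comp_same_law (X1 X2 : T -> R) (g : R -> R) :
  measurable_fun setT X1 -> measurable_fun setT X2 ->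
  (forall B : set R, measurable B -> P (X1 @^-1` B) = P (X2 @^-1` B)) ->
  measurable_fun setT g -> (forall x, 0 <= g x) ->
  (\int[P]_w (g (X1 w))%:E = \int[P]_w (g (X2 w))%:E)%E.
Proof.
move=> mX1 mX2 lawX mg g0.
have mEg : measurable_fun setT (EFin \o g) by exact/measurable_EFinP.
have Eg0 : {in setT, forall y, (0 <= (EFin \o g) y)%E} by move=> y _; rewrite lee_fin.
have := ge0_integral_pushforward mX1 P measurableT mEg Eg0.
have := ge0_integral_pushforward mX2 P measurableT mEg Eg0.
rewrite !preimage_setT => <- <-.
by apply: eq_measure_integral => A mA _; exact: lawX.
Qed.

Lemma subexp_mgf_le (Y : T -> R) (a t : R) :
  measurable_fun setT Y -> P.-integrable setT (EFin \o Y) ->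
  (\int[P]_w (Y w)%:E = 0)%E -> 0 < a ->
  (\int[P]_w (expR (`|Y w| / a))%:E <= 2%:E)%E -> 0 <= t <= 1 ->
  (\int[P]_w (expR (t / a * Y w))%:E <= (1 + t ^+ 2)%:E)%E.
Proof.
move=> mY iY EY a0 psiY t01.
pose h w := expR (`|Y w| / a).
have mh : measurable_fun setT h.
  by apply: measurableT_comp => //; apply: measurable_funM => //; exact: measurableT_comp.
have ih : P.-integrable setT (EFin \o h).
  apply/integrableP; split; first exact/measurable_EFinP.
  under eq_integral do rewrite /= ger0_norm ?expR_ge0//.
  by rewrite (le_lt_trans psiY) ?ltry.
have [v Eh] : exists v, (\int[P]_w (h w)%:E = v%:E)%E.
  exists (fine (\int[P]_w (h w)%:E)); rewrite fineK// ge0_fin_numE.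
    by rewrite (le_lt_trans psiY) ?ltry.
  by apply: integral_ge0 => w _; rewrite lee_fin expR_ge0.
have Ep w : expR (t / a * Y w) <= (1 - t ^+ 2) + (t / a * Y w + t ^+ 2 * h w).
  have := @expR_le_quadratic R t (Y w / a) t01.
  have -> : t * (Y w / a) = t / a * Y w by rewrite mulrA mulrAC.
  by rewrite /h normrM (gtr0_norm (_ : 0 < a^-1)) ?invr_gt0//; lra.
apply: (@le_trans _ _ (\int[P]_w ((1 - t ^+ 2) + (t / a * Y w + t ^+ 2 * h w))%:E)%E).
  apply: ge0_le_integral => //.
  - by apply/measurable_EFinP; apply: measurableT_comp => //; exact: measurable_funM.
  - by apply/measurable_EFinP; apply: measurable_funD => //;
      apply: measurable_funD => //; exact: measurable_funM.
  - by move=> w _; rewrite lee_fin Ep.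
have iZY : P.-integrable setT (fun w => (t / a)%:E * (Y w)%:E)%E by exact: integrableZl.
have iZh : P.-integrable setT (fun w => (t ^+ 2)%:E * (h w)%:E)%E by exact: integrableZl.
rewrite (eq_integral (fun w => (1 - t ^+ 2)%:E +
    ((t / a)%:E * (Y w)%:E + (t ^+ 2)%:E * (h w)%:E)))%E; last first.
  by move=> w _; rewrite -!EFinM -!EFinD.
rewrite integralD//; last 2 first.
- exact: finite_measure_integrable_cst.
- exact: integrableD.
rewrite integralD// integral_cst// measure_setT mule1 !integralZl// EY Eh.
rewrite mule0 add0e -EFinM -!EFinD lee_fin.
have : v <= 2 by rewrite -lee_fin -Eh.
have : 0 <= t ^+ 2 by rewrite exprn_ge0//; case/andP: t01.
nra.
Qed.

Section subexponential_family.
Variables (n : nat) (Y : 'I_n -> T -> R).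
Hypotheses (mY : forall i, measurable_fun setT (Y i))
  (indY : mutually_independent P Y)
  (iY : forall i, P.-integrable setT (EFin \o Y i))
  (EY : forall i, (\int[P]_w (Y i w)%:E = 0)%E).

Lemma chernoff_indep_sum (a t s : R) : 0 < a ->
  (forall i, \int[P]_w (expR (`|Y i w| / a))%:E <= 2%:E)%E -> 0 < t <= 1 ->
  (P [set w | (s <= \sum_i Y i w)%R] <= (expR (n%:R * t ^+ 2 - t / a * s))%:E)%E.
Proof.
move=> a0 psiY /andP[t0 t1].
have ta0 : 0 < t / a by rewrite divr_gt0.
have mS : measurable_fun setT (fun w => \sum_i Y i w) by exact: measurable_sum.
have mE : measurable_fun setT (fun w => expR (t / a * \sum_i Y i w)).
  by apply: measurableT_comp => //; exact: measurable_funM.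
have -> : [set w | (s <= \sum_i Y i w)%R] =
    [set w | (expR (t / a * s) <= expR (t / a * \sum_i Y i w))%R].
  by apply/seteqP; split => w /=; rewrite ler_expR ler_pM2l.
rewrite -(@lee_pmul2l _ (expR (t / a * s))%:E) ?lte_fin ?expR_gt0//.
apply: le_trans (markov_ge0 mE (fun w => expR_ge0 _) (expR_gt0 _)) _.
under eq_integral do rewrite mulr_sumr expR_sum.
apply: le_trans (integral_prod_indep_le mY indY _ (fun x => expR_ge0 (t / a * x))) _.
  by apply: measurableT_comp => //; exact: measurable_funM.
apply: (@le_trans _ _ (\prod_(i < n) (1 + t ^+ 2)%:E)%E).
  apply: lee_prod => i; apply/andP; split.
    by apply: integral_ge0 => w _; rewrite lee_fin expR_ge0.
  by apply: subexp_mgf_le => //; rewrite ltW ?t1.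
rewrite prodEFin -EFinM lee_fin -expRD addrCA subrr addr0 prodr_const card_ord.
rewrite expRM_natl lerXn2r ?nnegrE ?expR_ge0 ?expR_ge1Dx//.
by rewrite addr_ge0// exprn_ge0// ltW.
Qed.

Lemma indep_mean_tail (alpha L : R) : (0 < n)%N -> 0 <= alpha -> 0 < L ->
  (forall b, alpha < b -> exists2 a, 0 < a <= b &
     forall i, (\int[P]_w (expR (`|Y i w| / a))%:E <= 2%:E)%E) ->
  (P [set w | (alpha * (2 * Num.sqrt (L / n%:R) + 2 * L / n%:R) <
               (\sum_i Y i w) / n%:R)%R] <= (expR (- L))%:E)%E.
Proof.
move=> n0 alpha0 L0 psiY.
have n0' : 0 < n%:R :> R by rewrite ltr0n.
set r := Num.sqrt (L / n%:R).
have r0 : 0 < r by rewrite sqrtr_gt0 divr_gt0.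
have L_r : L = n%:R * r ^+ 2 by rewrite sqr_sqrtr ?divr_ge0 ?ltW// mulrC divfK// gt_eqF.
have -> : 2 * L / n%:R = 2 * r ^+ 2 by rewrite L_r mulrA mulrAC mulfK ?gt_eqF.
have C0 : 0 < 2 * r + 2 * r ^+ 2 by rewrite addr_gt0// mulr_gt0// exprn_gt0.
(* the infimum defining alpha need not be attained: bound P (s <= mean) for
   every s > alpha C and pass to the limit *)
apply: measure_gtr_le => [|s alphaC_s].
  by apply: measurable_funM => //; exact: measurable_sum.
have s0 : 0 < s by apply: le_lt_trans alphaC_s; rewrite mulr_ge0// ltW.
(* Chernoff at t = min(r, 1): t = r would optimize, but the mgf bound needs t <= 1 *)
pose t := Num.min r 1.
have t0 : 0 < t by rewrite lt_min r0 ltr01.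
have t1 : t <= 1 by rewrite ge_min lexx orbT.
have [|a /andP[a0 a_le] psiY_a] := psiY (s * (1 + t) / (2 * r + 2 * r ^+ 2)).
  by rewrite ltr_pdivlMr//; nra.
have -> : [set w | (s <= (\sum_i Y i w) / n%:R)%R] = [set w | (n%:R * s <= \sum_i Y i w)%R].
  by apply/seteqP; split => w /=; rewrite ler_pdivlMr// mulrC.
apply: le_trans (chernoff_indep_sum (t := t) (n%:R * s) a0 psiY_a _) _; first by rewrite t0.
rewrite lee_fin ler_expR L_r.
have : r ^+ 2 <= t * (s / a) - t ^+ 2.
  apply: exponent_min1_le => //.
  by rewrite mulrAC ler_pdivlMr// mulrC -ler_pdivlMr.
have -> : t / a * (n%:R * s) = n%:R * (t * (s / a)) by ring.
nra.
Qed.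

End subexponential_family.

Lemma psi1_norm_ge0 (Y : T -> R) (alpha : R) : psi1_norm P Y = alpha%:E -> 0 <= alpha.
Proof.
rewrite -lee_fin => <-; apply/ereal_infP => _ [c [c0 _] <-].
by rewrite lee_fin ltW.
Qed.

Lemma psi1_norm_gt_scale (Y : T -> R) (alpha b : R) :
  psi1_norm P Y = alpha%:E -> alpha < b ->
  exists2 a, 0 < a <= b & (\int[P]_w (expR (`|Y w| / a))%:E <= 2%:E)%E.
Proof.
rewrite -lte_fin => <- /ereal_inf_lt [_ [a [a0 psiY_a] <-]].
by rewrite lte_fin => ab; exists a => //; rewrite a0 ltW.
Qed.

Lemma probability_setCU_ge A B (a b : R) : measurable A -> measurable B ->
  (P A <= a%:E)%E -> (P B <= b%:E)%E -> ((1 - (a + b))%:E <= P (~` (A `|` B)))%E.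
Proof.
move=> mA mB PA PB; rewrite probability_setC; last exact: measurableU.
have PAB : (P (A `|` B) <= (a + b)%:E)%E.
  by apply: le_trans (measureU2 P mA mB) _; rewrite EFinD leeD.
rewrite -(fineK (fin_num_measure _ _ (measurableU _ _ mA mB))) in PAB *.
by rewrite -EFinB lee_fin lerB// -lee_fin.
Qed.

Lemma measurable_emp_mean n (X : 'I_n -> T -> R) :
  (forall i, measurable_fun setT (X i)) -> measurable_fun setT (emp_mean X).
Proof. by move=> mX; apply: measurable_funM => //; exact: measurable_sum. Qed.

Lemma iid_deviation_tail n (X : 'I_n -> T -> R) (i0 : 'I_n) (mu alpha sigma delta : R) :
  (forall i, measurable_fun setT (X i)) -> mutually_independent P X ->
  identically_distributed P X ->
  (forall i, P.-integrable setT (EFin \o X i)) ->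
  (forall i, \int[P]_w (X i w)%:E = mu%:E)%E ->
  psi1_norm P (fun w => X i0 w - mu) = alpha%:E -> `|sigma| = 1 -> 0 < delta < 1 ->
  (P [set w | (alpha * Cnd n delta < sigma * (emp_mean X w - mu))%R] <=
   (delta / 2)%:E)%E.
Proof.
move=> mX indX idX iX EX psiX sigma1 delta01.
pose Y i w := sigma * (X i w - mu).
have mphi : measurable_fun setT (fun x : R => sigma * (x - mu)).
  by apply: measurable_funM => //; exact: measurable_funB.
have mY i : measurable_fun setT (Y i) by exact: measurableT_comp mphi (mX i).
have indY : mutually_independent P Y := mutually_independent_comp mphi indX.
have iXmu i : P.-integrable setT (fun w => (X i w)%:E - mu%:E)%E.
  have := integrableB measurableT (iX i) (finite_measure_integrable_cst P mu measurableT).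
  by apply: eq_integrable.
have iY i : P.-integrable setT (EFin \o Y i).
  by have := integrableZl measurableT sigma (iXmu i); apply: eq_integrable.
have EY i : (\int[P]_w (Y i w)%:E = 0)%E.
  under eq_integral do rewrite EFinM EFinB.
  rewrite integralZl// (@integralB_EFin _ _ _ P setT (X i) (fun=> mu))//; last first.
    exact: finite_measure_integrable_cst.
  by rewrite EX integral_cst// measure_setT mule1 subee ?mule0.
have psiY b : alpha < b -> exists2 a, 0 < a <= b &
    forall i, (\int[P]_w (expR (`|Y i w| / a))%:E <= 2%:E)%E.
  move=> /(psi1_norm_gt_scale psiX) [a a_b psi_a]; exists a => // i.
  under eq_integral do rewrite /Y normrM sigma1 mul1r.
  have mg : measurable_fun setT (fun x : R => expR (`|x - mu| / a)).
    apply: measurableT_comp => //; apply: measurable_funM => //.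
    by apply: measurableT_comp => //; exact: measurable_funB.
  rewrite (ge0_integral_comp_same_law (mX i) (mX i0) (idX i i0) mg) //.
have n0 : (0 < n)%N := leq_ltn_trans (leq0n i0) (ltn_ord i0).
have meanY w : (\sum_i Y i w) / n%:R = sigma * (emp_mean X w - mu).
  rewrite -mulr_sumr sumrB sumr_const card_ord /emp_mean -mulrA; congr (_ * _).
  by rewrite mulrBl -[mu *+ n]mulr_natr mulfK // pnatr_eq0 -lt0n.
have := indep_mean_tail mY indY iY EY n0 (psi1_norm_ge0 psiX) (ln_two_div_gt0 delta01) psiY.
have /andP[delta0 _] := delta01.
rewrite expRN lnK ?posrE ?divr_gt0// invf_div.
by under eq_set do rewrite meanY.
Qed.

Lemma iid_mean_concentration n (X : 'I_n -> T -> R) (i0 : 'I_n) (mu alpha delta : R) :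
  (forall i, measurable_fun setT (X i)) -> mutually_independent P X ->
  identically_distributed P X ->
  (forall i, P.-integrable setT (EFin \o X i)) ->
  (forall i, \int[P]_w (X i w)%:E = mu%:E)%E ->
  psi1_norm P (fun w => X i0 w - mu) = alpha%:E -> 0 < delta < 1 ->
  ((1 - delta)%:E <= P [set w | (`|emp_mean X w - mu| <= alpha * Cnd n delta)%R])%E.
Proof.
move=> mX indX idX iX EX psiX delta01.
have mdev : measurable_fun setT (fun w => emp_mean X w - mu).
  by apply: measurable_funB => //; exact: measurable_emp_mean.
pose dev sigma := [set w | (alpha * Cnd n delta < sigma * (emp_mean X w - mu))%R].
have mdev_set sigma : measurable (dev sigma).
  by apply: measurable_ltr_set => //; exact: measurable_funM.
have tail sigma : `|sigma| = 1 -> (P (dev sigma) <= (delta / 2)%:E)%E.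
  by move=> sigma1; exact: iid_deviation_tail mX indX idX iX EX psiX sigma1 delta01.
have := probability_setCU_ge (mdev_set 1) (mdev_set (-1))
  (tail 1 (normr1 _)) (tail (-1) (normrN1 _)).
rewrite -splitr => /le_trans; apply; apply: le_measure.
- by apply/mem_set/measurableC; exact: measurableU.
- by apply/mem_set/measurable_ler_set => //; exact: measurableT_comp.
move=> w; rewrite /dev /= mul1r mulN1r => /not_orP[/negP + /negP].
by rewrite -!leNgt ler_norml -lerNl => -> ->.
Qed.

End probability_lemmas.

Theorem lemma5p1 (d : measure_display) (T : measurableType d) (R : realType)
  (P : probability T R) (n : nat) (hn : (0 < n)%N)
  (X : 'I_n -> {RV P >-> R}) (mu alpha delta : R) :
  mutually_independent P (fun i => X i : T -> R) ->
  identically_distributed P (fun i => X i : T -> R) ->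
  (forall i w, 0 < X i w) ->
  (forall i, ('E_P[X i] = mu%:E)%E) ->
  psi1_norm P (fun w => X (Ordinal hn) w - mu) = alpha%:E ->
  0 < delta < 1 ->
  let eta := alpha / mu in
  let C := Cnd n delta in
  ((1 - delta)%:E <=
     P [set w | (emp_mean (fun i => X i : T -> R) w * Num.max (1 - eta * C) 0 <= mu)%R])%E /\
  (eta * C <= 1 / 4 ->
   ((1 - delta)%:E <=
     P [set w | (emp_mean (fun i => X i : T -> R) w * Num.max (1 - eta * C) 0 <= mu)%R /\
               (mu <= emp_mean (fun i => X i : T -> R) w * (1 + 4 / 3 * eta * C))%R])%E).
Proof.
move=> indX idX Xpos EX psiX delta01 eta C.
set emp := emp_mean (fun i => X i : T -> R).
have mX i : measurable_fun setT (X i) by exact: measurable_funPT.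
have intX i : (\int[P]_w (X i w)%:E = mu%:E)%E by rewrite -expectation_def.
have iX i : P.-integrable setT (EFin \o X i).
  apply/integrableP; split; first exact/measurable_EFinP.
  by under eq_integral do rewrite /= ger0_norm ?ltW ?Xpos//; rewrite intX ltry.
have mu0 : 0 < mu by rewrite -lte_fin -(intX (Ordinal hn)) integral_gt0.
have concentrated := iid_mean_concentration mX indX idX iX intX psiX delta01.
have memp := measurable_emp_mean mX.
have mdev : measurable [set w | (`|emp w - mu| <= alpha * C)%R].
  by apply: measurable_ler_set => //; apply: measurableT_comp => //; exact: measurable_funB.
have alphaC : alpha * C = eta * C * mu by rewrite /eta mulrAC divfK ?gt_eqF.
have etaC0 : 0 <= eta * C.
  by rewrite mulr_ge0 ?Cnd_ge0 ?divr_ge0 ?(ltW mu0) ?(psi1_norm_ge0 psiX).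
split => [|etaC4]; apply: le_trans concentrated _; apply: le_measure; try exact: mem_set mdev.
- by apply/mem_set/measurable_ler_set => //; exact: measurable_funM.
- by move=> w; rewrite /= alphaC => /ler_normlP[_ up]; exact: relative_lower_bound.
- by apply/mem_set/measurableI; apply: measurable_ler_set => //; exact: measurable_funM.
- move=> w; rewrite /= alphaC => /ler_normlP[down up].
  split; first exact: relative_lower_bound.
  by rewrite -(mulrA (4 / 3)); apply: relative_upper_bound; rewrite // -opprB.
Qed.
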